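(* Let $X$ be a set and let $S$ be any collection of self-maps of $X$. Let $M_S$ be the monoid consisting of the identity map and all finite compositions $\phi_n\circ\cdots\circ\phi_1$ with $\phi_i\in S$, $n\geq1$. Suppose $F=\{Q_1,\dots,Q_n\}$ is a finite subset of $X$ such that (1) $\phi(X\setminus F)\subseteq X\setminus F$ for all $\phi\in S$, and (2) for each $Q_i\in F$ there exists $f_i\in M_S$ with $f_i(Q_i)\notin F$. Then there exists $g\in M_S$ such that $g(Q_i)\notin F$ for all $Q_i\in F$. *)

From Stdlib Require Import List.
Import ListNotations.

Inductive in_monoid {X : Type} (S : (X -> X) -> Prop) : (X -> X) -> Prop :=
| mon_id : in_monoid S (fun x => x)
| mon_comp : forall (phi f : X -> X),
    S phi -> in_monoid S f -> in_monoid S (fun x => phi (f x)).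

(* Send the points of F out of F one at a time.  If g already sends Q_1, ..., Q_k
   out of F and g(Q_(k+1)) is still in F, post-compose g with an escape map for
   the point g(Q_(k+1)) itself; since every element of M_S maps the complement of F
   into itself, Q_1, ..., Q_k stay outside F. *)

From Stdlib Require Import List Classical.

Section MonoidEscape.

Variables (X : Type) (S : (X -> X) -> Prop).

Lemma in_monoid_comp (f g : X -> X) :
  in_monoid S f -> in_monoid S g -> in_monoid S (fun x => f (g x)).
Proof.
  intros Hf Hg.
  induction Hf as [|phi f Hphi Hf IH].
  - exact Hg.
  - exact (mon_comp S phi (fun x => f (g x)) Hphi IH).
Qed.

Variable B : X -> Prop.

Hypothesis S_preserves_notB : forall phi, S phi -> forall x, ~ B x -> ~ B (phi x).

Lemma in_monoid_preserves_notB (f : X -> X) :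
  in_monoid S f -> forall x, ~ B x -> ~ B (f x).
Proof.
  intros Hf.
  induction Hf as [|phi f Hphi Hf IH]; intros x Hx.
  - exact Hx.
  - exact (S_preserves_notB phi Hphi (f x) (IH x Hx)).
Qed.

Hypothesis escape : forall Q, B Q -> exists f, in_monoid S f /\ ~ B (f Q).

Lemma in_monoid_escape_list (L : list X) :
  exists g, in_monoid S g /\ forall Q, In Q L -> ~ B (g Q).
Proof.
  induction L as [|a L IH].
  - exists (fun x => x). split; [constructor | intros Q []].
  - destruct IH as [g [Hg HL]].
    destruct (classic (B (g a))) as [Hga | Hga].
    + destruct (escape (g a) Hga) as [f [Hf Hfga]].
      exists (fun x => f (g x)). split.
      * exact (in_monoid_comp f g Hf Hg).
      * intros Q [<- | HQ].
        -- exact Hfga.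
        -- exact (in_monoid_preserves_notB f Hf (g Q) (HL Q HQ)).
    + exists g. split; [exact Hg |].
      intros Q [<- | HQ]; auto.
Qed.

End MonoidEscape.

Theorem lemma4p1 (X : Type) (S : (X -> X) -> Prop) (F : list X)
  (hinv : forall phi, S phi -> forall x, ~ In x F -> ~ In (phi x) F)
  (hesc : forall Q, In Q F -> exists f, in_monoid S f /\ ~ In (f Q) F) :
  exists g, in_monoid S g /\ forall Q, In Q F -> ~ In (g Q) F.
Proof.
  exact (in_monoid_escape_list X S (fun x => In x F) hinv hesc F).
Qed.
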